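(* Let $d\ge1$, $L_{2d}=2U\oplus 2E_8(-1)\oplus\langle -2d\rangle$, and let $r\in L_{2d}$ be a primitive vector with $r^2=-2d$. If $\mathrm{div}(r)=2d$, then $r^\perp_{L_{2d}}\cong 2U\oplus 2E_8(-1)$. If $\mathrm{div}(r)=d$, then either $r^\perp_{L_{2d}}\cong U\oplus 2E_8(-1)\oplus\langle 2\rangle\oplus\langle -2\rangle$ or $r^\perp_{L_{2d}}\cong U\oplus 2E_8(-1)\oplus U(2)$.
   Context: $U$ is the hyperbolic plane, $U(2)$ is $U$ with form multiplied by $2$, $E_8(-1)$ is the negative definite $E_8$ lattice, $\langle m\rangle$ is the rank one lattice with generator of square $m$. For $l\in L$, $\mathrm{div}(l)$ is the positive generator of the ideal $(l,L)\subset\mathbb Z$; $r^\perp_{L_{2d}}$ is the orthogonal complement of $r$ in $L_{2d}$. *)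

(* Integral lattices are given by integral Gram matrices;
   a lattice with Gram matrix G : 'M[int]_n is Z^n (row vectors) with
   bilinear form (x, y) = x G y^T. *)
From HB Require Import structures.
From mathcomp Require Import all_boot all_order all_algebra.
Set Implicit Arguments. Unset Strict Implicit. Unset Printing Implicit Defensive.
Import Order.TTheory GRing.Theory Num.Theory.
Local Open Scope ring_scope.

Definition bil (n : nat) (G : 'M[int]_n) (x y : 'rV[int]_n) : int :=
  (x *m G *m y^T) 0 0.

Definition dsum (m n : nat) (A : 'M[int]_m) (B : 'M[int]_n) : 'M[int]_(m + n) :=
  block_mx A 0 0 B.

Definition Ugram : 'M[int]_2 := \matrix_(i, j) (if i != j then 1 else 0).
Definition U2gram : 'M[int]_2 := 2%:~R *: Ugram.
Definition rank1 (m : int) : 'M[int]_1 := m%:M.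

(* Edges of the E8 Dynkin diagram on nodes 0..7: chain 0-1-2-3-4-5-6,
   node 7 attached to node 4 (arms of lengths 4, 2, 1 from node 4). *)
Definition E8edge (i j : nat) : bool :=
  ((i.+1 == j) && (j <= 6)%N) || ((j.+1 == i) && (i <= 6)%N)
  || ((i == 4%N) && (j == 7%N)) || ((i == 7%N) && (j == 4%N)).
Definition E8m : 'M[int]_8 :=
  \matrix_(i, j) (if i == j then -2 else if E8edge i j then 1 else 0).

Definition L2d (d : nat) :=
  dsum (dsum (dsum (dsum Ugram Ugram) E8m) E8m) (rank1 (- (2 * d)%:Z)).

Definition primitive (n : nat) (r : 'rV[int]_n) : Prop :=
  forall (k : int) (s : 'rV[int]_n), r = k *: s -> k = 1 \/ k = -1.

Definition is_div (n : nat) (G : 'M[int]_n) (r : 'rV[int]_n) (m : int) : Prop :=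
  0 < m /\ (forall x, (m %| bil G r x)%Z) /\ (exists x, bil G r x = m).

Definition perp_iso (n k : nat) (G : 'M[int]_n) (r : 'rV[int]_n) (H : 'M[int]_k) : Prop :=
  exists B : 'M[int]_(k, n),
    (forall c : 'rV[int]_k, c *m B = 0 -> c = 0) /\
    (forall x : 'rV[int]_n, bil G r x = 0 <-> exists c : 'rV[int]_k, x = c *m B) /\
    B *m G *m B^T = H.

(* Isometries of L_2d preserve r^2, div(r) and the isometry class of r^perp, and the
   Eichler transvections x |-> x + (x, e) y - (x, y) e - (y^2/2)(x, e) e (e isotropic,
   y orthogonal to e) built from the two copies of U and the two copies of E8(-1) move
   every vector to the normal form r0 = k e1 + k t f1 + z l, where (e1, f1) is a
   hyperbolic basis of the first U and l generates <-2d>: this is a descent on |(r, f1)|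
   by Euclidean division, using that E8(-1) is even and unimodular.

   Then r0^perp = U + 2 E8(-1) + N, where N is the orthogonal of r0 in U + <-2d>.
   Writing k = div(r) kp and 2 d z = div(r) A, with kp and A coprime, the vectors
   e1 - t f1 and A f1 + kp l form a basis of N, with Gram matrix
   [[-2t, A], [A, -2d kp^2]]. Since r0^2 = -2d, this form has determinant -1 when
   div(r) = 2d, and is twice a form of determinant -1 when div(r) = d. Finally, an
   integral binary form of determinant -1 has a basis with Gram matrix [[0, 1], [1, e]]
   for some e in {0, 1}: it is U when the form is even, and otherwise U or <1> + <-1>. *)

From HB Require Import structures.
From mathcomp Require Import all_boot all_order all_algebra.
From mathcomp Require Import ring zify.
From Stdlib Require Import Classical.
Set Implicit Arguments. Unset Strict Implicit. Unset Printing Implicit Defensive.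
Import Order.TTheory GRing.Theory Num.Theory.
Local Open Scope ring_scope.

Definition gram n p q (G : 'M[int]_n) (A : 'M[int]_(p, n)) (B : 'M[int]_(q, n)) :=
  A *m G *m B^T.

Lemma bil_gram n (G : 'M[int]_n) x y : bil G x y = gram G x y 0 0.
Proof. by []. Qed.

Lemma gram_dsum m n p q (P : 'M[int]_m) (Q : 'M[int]_n) (A1 : 'M_(p, m)) A2
    (B1 : 'M_(q, m)) B2 :
  gram (dsum P Q) (row_mx A1 A2) (row_mx B1 B2) = gram P A1 B1 + gram Q A2 B2.
Proof.
rewrite /gram /dsum tr_row_mx mul_row_block !mulmx0 !addr0 !add0r.
by rewrite mul_row_col.
Qed.

Lemma gram_col_mxl n p1 p2 q (G : 'M[int]_n) (A1 : 'M_(p1, n)) (A2 : 'M_(p2, n))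
    (B : 'M_(q, n)) :
  gram G (col_mx A1 A2) B = col_mx (gram G A1 B) (gram G A2 B).
Proof. by rewrite /gram !mul_col_mx. Qed.

Lemma gram_col_mxr n p q1 q2 (G : 'M[int]_n) (A : 'M_(p, n)) (B1 : 'M_(q1, n))
    (B2 : 'M_(q2, n)) :
  gram G A (col_mx B1 B2) = row_mx (gram G A B1) (gram G A B2).
Proof. by rewrite /gram tr_col_mx mul_mx_row. Qed.

Lemma tr_gram n p q (G : 'M[int]_n) (A : 'M_(p, n)) (B : 'M_(q, n)) :
  G^T = G -> (gram G A B)^T = gram G B A.
Proof. by move=> G_sym; rewrite /gram !trmx_mul trmxK G_sym mulmxA. Qed.

Lemma gram_col_mx_orth n p1 p2 (G : 'M[int]_n) (A1 : 'M_(p1, n)) (A2 : 'M_(p2, n)) :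
  G^T = G -> gram G A1 A2 = 0 ->
  gram G (col_mx A1 A2) (col_mx A1 A2) = dsum (gram G A1 A1) (gram G A2 A2).
Proof.
move=> G_sym A12; rewrite gram_col_mxl !gram_col_mxr -(tr_gram A1 A2 G_sym) A12.
by rewrite trmx0.
Qed.

Lemma gram0l n p q (G : 'M[int]_n) (B : 'M_(q, n)) : gram G (0 : 'M_(p, n)) B = 0.
Proof. by rewrite /gram !mul0mx. Qed.

Lemma gram0r n p q (G : 'M[int]_n) (A : 'M_(p, n)) : gram G A (0 : 'M_(q, n)) = 0.
Proof. by rewrite /gram trmx0 mulmx0. Qed.

Lemma gram_id n (G : 'M[int]_n) : gram G 1%:M 1%:M = G.
Proof. by rewrite /gram mul1mx trmx1 mulmx1. Qed.

Lemma gram_mull n p q r (G : 'M[int]_n) (P : 'M[int]_(r, p)) (A : 'M_(p, n))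
    (B : 'M_(q, n)) :
  gram G (P *m A) B = P *m gram G A B.
Proof. by rewrite /gram !mulmxA. Qed.

Lemma gram_mulr n p q r (G : 'M[int]_n) (A : 'M_(p, n)) (P : 'M[int]_(r, q))
    (B : 'M_(q, n)) :
  gram G A (P *m B) = gram G A B *m P^T.
Proof. by rewrite /gram trmx_mul !mulmxA. Qed.

Lemma gram_entry n p q (G : 'M[int]_n) (A : 'M_(p, n)) (B : 'M_(q, n)) i j :
  gram G A B i j = bil G (row i A) (row j B).
Proof.
by rewrite bil_gram !rowE gram_mull gram_mulr trmx_delta -rowE -colE !mxE.
Qed.

Section Bilinear.
Variables (n : nat) (G : 'M[int]_n).

Lemma bilDl x y z : bil G (x + y) z = bil G x z + bil G y z.
Proof. by rewrite /bil !mulmxDl mxE. Qed.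
Lemma bilDr x y z : bil G z (x + y) = bil G z x + bil G z y.
Proof. by rewrite /bil linearD /= mulmxDr mxE. Qed.
Lemma bilZl c x z : bil G (c *: x) z = c * bil G x z.
Proof. by rewrite /bil -!scalemxAl mxE. Qed.
Lemma bilZr c x z : bil G z (c *: x) = c * bil G z x.
Proof. by rewrite /bil linearZ /= -scalemxAr mxE. Qed.
Lemma bilNl x z : bil G (- x) z = - bil G x z.
Proof. by rewrite -scaleN1r bilZl mulN1r. Qed.
Lemma bilNr x z : bil G z (- x) = - bil G z x.
Proof. by rewrite -scaleN1r bilZr mulN1r. Qed.
Lemma bilBl x y z : bil G (x - y) z = bil G x z - bil G y z.
Proof. by rewrite bilDl bilNl. Qed.
Lemma bil0l z : bil G 0 z = 0.
Proof. by rewrite /bil !mul0mx mxE. Qed.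
Lemma bil0r z : bil G z 0 = 0.
Proof. by rewrite /bil trmx0 mulmx0 mxE. Qed.

Lemma bilC x y : G^T = G -> bil G x y = bil G y x.
Proof.
move=> sG; rewrite /bil.
have -> : y *m G *m x^T = (x *m G *m y^T)^T by rewrite !trmx_mul trmxK sG mulmxA.
by rewrite [RHS]mxE.
Qed.

Lemma matrix_bilP (H : 'M[int]_n) : (forall x y, bil G x y = bil H x y) -> G = H.
Proof.
move=> eGH; apply/matrixP => i j.
by rewrite -(gram_id G) -(gram_id H) !gram_entry eGH.
Qed.

End Bilinear.

Lemma matrix_mulP n (A B : 'M[int]_n) : (forall x : 'rV_n, x *m A = x *m B) -> A = B.
Proof. by move=> eAB; apply/row_matrixP => i; rewrite !rowE eAB. Qed.

Lemma mul_mx11 n (c : 'M[int]_1) (y : 'rV[int]_n) : c *m y = c 0 0 *: y.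
Proof. by rewrite {1}[c]mx11_scalar mul_scalar_mx. Qed.

Definition is_isometry n (G : 'M[int]_n) (g h : 'M[int]_n) :=
  [/\ g *m h = 1%:M, h *m g = 1%:M & g *m G *m g^T = G].

Definition same_orbit n (G : 'M[int]_n) (x y : 'rV[int]_n) :=
  exists g h, is_isometry G g h /\ y = x *m g.

Lemma bil_isometry n (G : 'M[int]_n) g x z : g *m G *m g^T = G ->
  bil G (x *m g) (z *m g) = bil G x z.
Proof. by move=> gG; rewrite !bil_gram gram_mull gram_mulr /gram gG mulmxA. Qed.

Lemma is_isometry_sym n (G : 'M[int]_n) g h : is_isometry G g h -> is_isometry G h g.
Proof.
case=> gh hg gG; split=> //; rewrite -[in LHS]gG.
by rewrite -!mulmxA !mulmxA hg mul1mx -mulmxA -trmx_mul hg trmx1 mulmx1.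
Qed.

Lemma same_orbit_refl n (G : 'M[int]_n) x : same_orbit G x x.
Proof.
exists 1%:M, 1%:M; split; last by rewrite mulmx1.
by split; rewrite ?mulmx1 ?mul1mx ?trmx1 ?mulmx1.
Qed.

Lemma same_orbit_trans n (G : 'M[int]_n) x y z :
  same_orbit G x y -> same_orbit G y z -> same_orbit G x z.
Proof.
move=> [g1 [h1 [[gh1 hg1 gG1] ->]]] [g2 [h2 [[gh2 hg2 gG2] ->]]].
exists (g1 *m g2), (h2 *m h1); rewrite mulmxA; split=> //; split.
- by rewrite -mulmxA [g2 *m _]mulmxA gh2 mul1mx gh1.
- by rewrite -mulmxA [h1 *m _]mulmxA hg1 mul1mx hg2.
- rewrite trmx_mul -!mulmxA [g2 *m (G *m _)]mulmxA [g2 *m G *m _]mulmxA gG2.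
  by rewrite mulmxA.
Qed.

Section SameOrbit.
Variables (n : nat) (G : 'M[int]_n) (r r0 : 'rV[int]_n).
Hypothesis orbit_r : same_orbit G r r0.

Lemma same_orbit_bil : bil G r0 r0 = bil G r r.
Proof. by case: orbit_r => g [h [[_ _ gG] ->]]; rewrite bil_isometry. Qed.

Lemma same_orbit_div m : is_div G r m -> is_div G r0 m.
Proof.
case: orbit_r => g [h [[gh hg gG] ->]] [m_gt0 [m_dvd [x hx]]].
split=> //; split; last by exists (x *m g); rewrite bil_isometry.
by move=> z; rewrite -[z]mulmx1 -hg mulmxA bil_isometry.
Qed.

Lemma same_orbit_perp k (H : 'M[int]_k) : perp_iso G r0 H -> perp_iso G r H.
Proof.
case: orbit_r => g [h [isog ->]] [B [B_free [B_span B_gram]]].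
have [gh hg gG] := isog; have [_ _ hG] := is_isometry_sym isog.
exists (B *m h); split; [|split].
- by move=> c hc; apply: B_free; rewrite -[_ *m B]mulmx1 -hg mulmxA -(mulmxA c) hc mul0mx.
- move=> x; rewrite -(bil_isometry r x gG) B_span.
  split=> [[c hc]|[c hc]]; exists c.
  + by rewrite -[x]mulmx1 -gh mulmxA hc mulmxA.
  + by rewrite hc -!mulmxA hg mulmx1.
- by rewrite -B_gram -[LHS]/(gram _ _ _) gram_mull gram_mulr /gram hG mulmxA.
Qed.

End SameOrbit.

Lemma perp_iso_conj n k k' (G : 'M[int]_n) r (H : 'M[int]_k) (P : 'M[int]_(k', k))
    (Q : 'M[int]_(k, k')) :
  P *m Q = 1%:M -> Q *m P = 1%:M -> perp_iso G r H -> perp_iso G r (P *m H *m P^T).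
Proof.
move=> PQ QP [B [B_free [B_span B_gram]]]; exists (P *m B); split; [|split].
- by move=> c hc; rewrite -[c]mulmx1 -PQ mulmxA (B_free (c *m P)) ?mul0mx // -mulmxA.
- move=> x; rewrite B_span; split=> [[c ->]|[c ->]].
  + by exists (c *m Q); rewrite -mulmxA (mulmxA Q) QP mul1mx.
  + by exists (c *m P); rewrite mulmxA.
- by rewrite -B_gram -[LHS]/(gram _ _ _) gram_mull gram_mulr mulmxA.
Qed.

Lemma perp_iso_dsumC n p q (G : 'M[int]_n) r (A : 'M[int]_p) (B : 'M[int]_q) :
  perp_iso G r (dsum A B) -> perp_iso G r (dsum B A).
Proof.
pose sw m1 m2 : 'M[int]_(m2 + m1, m1 + m2) := block_mx 0 1%:M 1%:M 0.
have swK m1 m2 : sw m1 m2 *m sw m2 m1 = 1%:M.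
  by rewrite mulmx_block !mulmx0 !mul0mx !mulmx1 !addr0 !add0r -scalar_mx_block.
move=> /(perp_iso_conj (swK p q) (swK q p)).
rewrite /dsum mulmx_block tr_block_mx mulmx_block.
by rewrite !(trmx0, trmx1, mulmx0, mul0mx, mulmx1, mul1mx, addr0, add0r).
Qed.

Lemma dsumA m n p (A : 'M[int]_m) (B : 'M[int]_n) (C : 'M[int]_p) :
  dsum A (dsum B C) = castmx (esym (addnA m n p), esym (addnA m n p)) (dsum (dsum A B) C).
Proof.
rewrite /dsum -[X in block_mx _ X]row_mx0 -[X in block_mx _ _ X]col_mx0 block_mxA /=.
by rewrite row_mx0 col_mx0.
Qed.

(** * Eichler transvections *)

Definition eichler n (G : 'M[int]_n) (e y : 'rV[int]_n) (q : int) : 'M[int]_n :=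
  1%:M + (G *m e^T) *m y - (G *m y^T) *m e - q *: ((G *m e^T) *m e).

Lemma mul_eichler n (G : 'M[int]_n) e y q x :
  x *m eichler G e y q = x + bil G x e *: y - bil G x y *: e - (q * bil G x e) *: e.
Proof.
rewrite /eichler !mulmxDr !mulmxN mulmx1 -!scalemxAr !mulmxA !mul_mx11.
by rewrite scalerA.
Qed.

Section Eichler.
Variables (n : nat) (G : 'M[int]_n) (e y : 'rV[int]_n) (q : int).
Hypotheses (G_sym : G^T = G) (e_iso : bil G e e = 0) (ye : bil G y e = 0)
  (yy : bil G y y = q + q).

Lemma bil_eichler x z :
  bil G (x *m eichler G e y q) (z *m eichler G e y q) = bil G x z.
Proof.
rewrite !mul_eichler !(bilDl, bilDr, bilBl, bilNl, bilNr, bilZl, bilZr).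
by rewrite [bil G y z]bilC // [bil G e z]bilC // [bil G e y]bilC // ye e_iso yy; ring.
Qed.

Lemma eichlerK (y' : 'rV[int]_n) : bil G y' e = 0 -> bil G y' y' = q + q ->
  forall x : 'rV_n, x *m eichler G e y' q *m eichler G e (- y') q = x.
Proof.
move=> y'e y'y' x.
have xe : bil G (x *m eichler G e y' q) e = bil G x e.
  by rewrite mul_eichler !(bilDl, bilBl, bilNl, bilZl) y'e e_iso; ring.
have xy' : bil G (x *m eichler G e y' q) (- y') = - (bil G x y' + (q + q) * bil G x e).
  rewrite mul_eichler !(bilNr, bilDl, bilBl, bilNl, bilZl) y'y' [bil G e y']bilC // y'e; ring.
rewrite [_ *m eichler G e (- y') q]mul_eichler xe xy' mul_eichler.
by apply/matrixP => i j; rewrite !mxE; ring.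
Qed.

Lemma eichler_isometry : is_isometry G (eichler G e y q) (eichler G e (- y) q).
Proof.
have ye' : bil G (- y) e = 0 by rewrite bilNl ye oppr0.
have yy' : bil G (- y) (- y) = q + q by rewrite bilNl bilNr opprK.
split.
- by apply: matrix_mulP => x; rewrite mulmx1 mulmxA eichlerK.
- by apply: matrix_mulP => x; rewrite mulmx1 mulmxA -{2}(opprK y) eichlerK // opprK.
- apply: matrix_bilP => x z.
  by rewrite -bil_eichler /bil trmx_mul !mulmxA.
Qed.

Lemma same_orbit_eichler x :
  same_orbit G x (x + bil G x e *: y - bil G x y *: e - (q * bil G x e) *: e).
Proof.
by exists (eichler G e y q), (eichler G e (- y) q); rewrite mul_eichler; split=> //;
  exact: eichler_isometry.
Qed.

End Eichler.

(** * The lattice E8(-1) *)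

Definition E8m_inv : 'M[int]_8 := \matrix_(i, j) nth 0 (nth [::] [::
  [:: -2; -3; -4; -5; -6; -4; -2; -3];
  [:: -3; -6; -8; -10; -12; -8; -4; -6];
  [:: -4; -8; -12; -15; -18; -12; -6; -9];
  [:: -5; -10; -15; -20; -24; -16; -8; -12];
  [:: -6; -12; -18; -24; -30; -20; -10; -15];
  [:: -4; -8; -12; -16; -20; -14; -7; -10];
  [:: -2; -4; -6; -8; -10; -7; -4; -5];
  [:: -3; -6; -9; -12; -15; -10; -5; -8]] i) j.

Definition E8m_half : 'M[int]_8 :=
  \matrix_(i, j) (if (i < j)%N then E8m i j else if i == j then -1 else 0).

Ltac E8_entries :=
  apply/matrixP; let i := fresh "i" in let j := fresh "j" in move=> i j;
  rewrite !mxE; try (rewrite !big_ord_recr big_ord0 /= !mxE);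
  by case: i => [[|[|[|[|[|[|[|[|//]]]]]]]] ?];
     case: j => [[|[|[|[|[|[|[|[|//]]]]]]]] ?]; vm_compute.

Lemma mulmx_E8m_inv : E8m *m E8m_inv = 1%:M.
Proof. by E8_entries. Qed.

Lemma tr_E8m : E8m^T = E8m.
Proof. by E8_entries. Qed.

Lemma E8m_half_split : E8m = E8m_half + E8m_half^T.
Proof. by E8_entries. Qed.

Lemma bil_E8m_even k : exists q, bil E8m k k = q + q.
Proof.
exists (bil E8m_half k k); rewrite E8m_half_split /bil mulmxDr mulmxDl mxE.
congr (_ + _).
have -> : k *m E8m_half^T *m k^T = (k *m E8m_half *m k^T)^T by rewrite !trmx_mul trmxK mulmxA.
by rewrite [LHS]mxE.
Qed.

Lemma E8m_unimodular (m : int) k : (forall l, (m %| bil E8m k l)%Z) ->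
  exists k', k = m *: k'.
Proof.
move=> m_dvd; pose k' : 'rV[int]_8 := \row_j divz ((k *m E8m) 0 j) m.
exists (k' *m E8m_inv).
have kE : k *m E8m = m *: k'.
  apply/matrixP => i j; rewrite (ord1 i) [RHS]mxE [k' _ _]mxE mulrC divzK //.
  by have := m_dvd (delta_mx 0 j); rewrite /bil trmx_delta -colE mxE.
by rewrite scalemxAl -kE -mulmxA mulmx_E8m_inv mulmx1.
Qed.

Lemma E8m_nondegenerate k : k != 0 -> exists l, bil E8m k l != 0.
Proof.
move=> k_neq0; apply: NNPP => k_rad.
have [k' kE] : exists k', k = 0 *: k'.
  apply: E8m_unimodular => l; case: (eqVneq (bil E8m k l) 0) => [->|kl] //.
  by case: k_rad; exists l.
by move: k_neq0; rewrite kE scale0r eqxx.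
Qed.

Definition L2d_mx p (u1 u2 : 'M[int]_(p, 2)) (k1 k2 : 'M[int]_(p, 8)) (z : 'M[int]_(p, 1))
  : 'M[int]_(p, 2 + 2 + 8 + 8 + 1) := row_mx (row_mx (row_mx (row_mx u1 u2) k1) k2) z.

Lemma gram_L2d_mx d p q u1 u2 k1 k2 z v1 v2 l1 l2 w :
  gram (L2d d) (@L2d_mx p u1 u2 k1 k2 z) (@L2d_mx q v1 v2 l1 l2 w) =
  gram Ugram u1 v1 + gram Ugram u2 v2 + gram E8m k1 l1 + gram E8m k2 l2
  + gram (rank1 (- (2 * d)%:Z)) z w.
Proof. by rewrite /L2d_mx /L2d !gram_dsum. Qed.

Lemma L2d_mxD p u1 u2 k1 k2 z u1' u2' k1' k2' z' :
  @L2d_mx p u1 u2 k1 k2 z + L2d_mx u1' u2' k1' k2' z' =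
  L2d_mx (u1 + u1') (u2 + u2') (k1 + k1') (k2 + k2') (z + z').
Proof. by rewrite /L2d_mx !add_row_mx. Qed.

Lemma L2d_mxZ p c u1 u2 k1 k2 z :
  c *: @L2d_mx p u1 u2 k1 k2 z = L2d_mx (c *: u1) (c *: u2) (c *: k1) (c *: k2) (c *: z).
Proof. by rewrite /L2d_mx !scale_row_mx. Qed.

Lemma L2d_mxN p u1 u2 k1 k2 z :
  - @L2d_mx p u1 u2 k1 k2 z = L2d_mx (- u1) (- u2) (- k1) (- k2) (- z).
Proof. by rewrite /L2d_mx !opp_row_mx. Qed.

Lemma L2d_mx0 p : @L2d_mx p 0 0 0 0 0 = 0.
Proof. by rewrite /L2d_mx !row_mx0. Qed.

Lemma mul_L2d_mx p q (c : 'M[int]_(q, p)) u1 u2 k1 k2 z :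
  c *m L2d_mx u1 u2 k1 k2 z = L2d_mx (c *m u1) (c *m u2) (c *m k1) (c *m k2) (c *m z).
Proof. by rewrite /L2d_mx !mul_mx_row. Qed.

Lemma L2d_mx_inj p u1 u2 k1 k2 z u1' u2' k1' k2' z' :
  @L2d_mx p u1 u2 k1 k2 z = L2d_mx u1' u2' k1' k2' z' ->
  [/\ u1 = u1', u2 = u2', k1 = k1', k2 = k2' & z = z'].
Proof.
by rewrite /L2d_mx => /eq_row_mx [/eq_row_mx [/eq_row_mx [/eq_row_mx [-> ->] ->] ->] ->].
Qed.

Lemma L2d_mxP p (x : 'M[int]_(p, 2 + 2 + 8 + 8 + 1)) :
  exists u1 u2 k1 k2 z, x = L2d_mx u1 u2 k1 k2 z.
Proof.
exists (lsubmx (lsubmx (lsubmx (lsubmx x)))), (rsubmx (lsubmx (lsubmx (lsubmx x)))),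
  (rsubmx (lsubmx (lsubmx x))), (rsubmx (lsubmx x)), (rsubmx x).
by rewrite /L2d_mx !hsubmxK.
Qed.

Definition hvec (a b : int) : 'rV[int]_2 := \row_(i < 2) (if (i : nat) == 0%N then a else b).

Lemma hvecE (u : 'rV[int]_2) : u = hvec (u 0 0) (u 0 1).
Proof.
apply/matrixP => i j; rewrite (ord1 i) !mxE.
by case: j => [[|[|//]] ?] /=; congr (u _ _); apply/val_inj.
Qed.

Lemma hvecD a b a' b' : hvec a b + hvec a' b' = hvec (a + a') (b + b').
Proof. by apply/matrixP => i j; rewrite !mxE; case: ifP. Qed.
Lemma hvecZ c a b : c *: hvec a b = hvec (c * a) (c * b).
Proof. by apply/matrixP => i j; rewrite !mxE; case: ifP. Qed.
Lemma hvecN a b : - hvec a b = hvec (- a) (- b).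
Proof. by apply/matrixP => i j; rewrite !mxE; case: ifP. Qed.
Lemma hvec0 : hvec 0 0 = 0.
Proof. by apply/matrixP => i j; rewrite !mxE; case: ifP. Qed.

Lemma hvec_inj a b a' b' : hvec a b = hvec a' b' -> a = a' /\ b = b'.
Proof.
move=> e; have := congr1 (fun u : 'rV[int]_2 => u 0 0) e.
by have := congr1 (fun u : 'rV[int]_2 => u 0 1) e; rewrite !mxE.
Qed.

Lemma bil_hvec a b a' b' : bil Ugram (hvec a b) (hvec a' b') = a * b' + b * a'.
Proof.
rewrite /bil !mxE !big_ord_recr !big_ord0 /= !mxE !big_ord_recr !big_ord0 /= !mxE /=.
ring.
Qed.

Lemma bil_rank1 m z w : bil (rank1 m) z%:M w%:M = z * m * w.
Proof. by rewrite /bil /rank1 tr_scalar_mx -!scalar_mxM mxE. Qed.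

(* Coordinates of [L2d]: [(a, b)] and [(c, d)] in the two copies of [U], whose
   standard isotropic bases we call [e1, f1] and [e2, f2]; [k1, k2] in the two
   copies of [E8(-1)]; [z] along the generator of [<-2d>]. *)
Definition L2d_vec (a b c d : int) (k1 k2 : 'rV[int]_8) (z : int) :
  'rV[int]_(2 + 2 + 8 + 8 + 1) := L2d_mx (hvec a b) (hvec c d) k1 k2 z%:M.

Lemma bil_L2d_vec n a b c d k1 k2 z a' b' c' d' l1 l2 z' :
  bil (L2d n) (L2d_vec a b c d k1 k2 z) (L2d_vec a' b' c' d' l1 l2 z') =
  a * b' + b * a' + c * d' + d * c' + bil E8m k1 l1 + bil E8m k2 l2
  - (2 * n)%:Z * z * z'.
Proof.
have addE (A B : 'M[int]_1) : (A + B) 0 0 = A 0 0 + B 0 0 by rewrite mxE.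
rewrite bil_gram /L2d_vec gram_L2d_mx !addE -!bil_gram !bil_hvec bil_rank1.
by rewrite -[(2 * n)%:Z]/(Posz (2 * n)); ring.
Qed.

Lemma L2d_vecD a b c d k1 k2 z a' b' c' d' l1 l2 z' :
  L2d_vec a b c d k1 k2 z + L2d_vec a' b' c' d' l1 l2 z' =
  L2d_vec (a + a') (b + b') (c + c') (d + d') (k1 + l1) (k2 + l2) (z + z').
Proof. by rewrite /L2d_vec L2d_mxD !hvecD raddfD. Qed.

Lemma L2d_vecZ x a b c d k1 k2 z :
  x *: L2d_vec a b c d k1 k2 z =
  L2d_vec (x * a) (x * b) (x * c) (x * d) (x *: k1) (x *: k2) (x * z).
Proof. by rewrite /L2d_vec L2d_mxZ !hvecZ scale_scalar_mx. Qed.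

Lemma L2d_vecN a b c d k1 k2 z :
  - L2d_vec a b c d k1 k2 z = L2d_vec (- a) (- b) (- c) (- d) (- k1) (- k2) (- z).
Proof. by rewrite /L2d_vec L2d_mxN !hvecN raddfN. Qed.

Lemma L2d_vec0 : L2d_vec 0 0 0 0 0 0 0 = 0.
Proof. by rewrite /L2d_vec !hvec0 raddf0 L2d_mx0. Qed.

Lemma L2d_vec_inj a b c d k1 k2 z a' b' c' d' l1 l2 z' :
  L2d_vec a b c d k1 k2 z = L2d_vec a' b' c' d' l1 l2 z' ->
  [/\ a = a', b = b', c = c' & d = d'] /\ [/\ k1 = l1, k2 = l2 & z = z'].
Proof.
rewrite /L2d_vec => /L2d_mx_inj [/hvec_inj [-> ->] /hvec_inj [-> ->] -> ->] ez.
by split=> //; split=> //; move: (congr1 (fun m : 'M[int]_1 => m 0 0) ez); rewrite !mxE.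
Qed.

Lemma L2d_vecP (x : 'rV[int]_(2 + 2 + 8 + 8 + 1)) :
  exists a b c d k1 k2 z, x = L2d_vec a b c d k1 k2 z.
Proof.
have [u1 [u2 [k1 [k2 [z ->]]]]] := L2d_mxP x.
exists (u1 0 0), (u1 0 1), (u2 0 0), (u2 0 1), k1, k2, (z 0 0).
by rewrite /L2d_vec -!hvecE -mx11_scalar.
Qed.

Lemma tr_L2d n : (L2d n)^T = L2d n.
Proof.
have trU : Ugram^T = Ugram by apply/matrixP => i j; rewrite !mxE eq_sym.
by rewrite /L2d /dsum !tr_block_mx !trmx0 trU tr_E8m /rank1 tr_scalar_mx.
Qed.

(** * The Eichler normal form *)

Section L2dOrbits.
Variable n : nat.
Local Notation G := (L2d n).

Lemma same_orbit_L2d_eichler e y q x x' :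
  bil G e e = 0 -> bil G y e = 0 -> bil G y y = q + q ->
  x + bil G x e *: y - bil G x y *: e - (q * bil G x e) *: e = x' -> same_orbit G x x'.
Proof. by move=> e_iso ye yy <-; apply: same_orbit_eichler => //; apply: tr_L2d. Qed.

Ltac L2d_simp := rewrite ?(bil_L2d_vec, bil0l, bil0r, L2d_vecZ, L2d_vecN, L2d_vecD).
Ltac L2d_move := L2d_simp; rewrite ?(scaler0, scale0r, oppr0, addr0); try ring;
  f_equal; try ring; by congr (_ + _ *: _); ring.

Lemma orbit_e1_e2 l a b c d k1 k2 z :
  same_orbit G (L2d_vec a b c d k1 k2 z) (L2d_vec (a - l * d) b (c + l * b) d k1 k2 z).
Proof.
by apply: (@same_orbit_L2d_eichler (L2d_vec 1 0 0 0 0 0 0) (L2d_vec 0 0 l 0 0 0 0) 0);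
  L2d_move.
Qed.

Lemma orbit_e1_f2 l a b c d k1 k2 z :
  same_orbit G (L2d_vec a b c d k1 k2 z) (L2d_vec (a - l * c) b c (d + l * b) k1 k2 z).
Proof.
by apply: (@same_orbit_L2d_eichler (L2d_vec 1 0 0 0 0 0 0) (L2d_vec 0 0 0 l 0 0 0) 0);
  L2d_move.
Qed.

Lemma orbit_f1_e2 l a b c d k1 k2 z :
  same_orbit G (L2d_vec a b c d k1 k2 z) (L2d_vec a (b - l * d) (c + l * a) d k1 k2 z).
Proof.
by apply: (@same_orbit_L2d_eichler (L2d_vec 0 1 0 0 0 0 0) (L2d_vec 0 0 l 0 0 0 0) 0);
  L2d_move.
Qed.

Lemma orbit_f1_f2 l a b c d k1 k2 z :
  same_orbit G (L2d_vec a b c d k1 k2 z) (L2d_vec a (b - l * c) c (d + l * a) k1 k2 z).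
Proof.
by apply: (@same_orbit_L2d_eichler (L2d_vec 0 1 0 0 0 0 0) (L2d_vec 0 0 0 l 0 0 0) 0);
  L2d_move.
Qed.

Lemma orbit_f1_E8 l1 l2 a b c d k1 k2 z : exists2 q,
  bil E8m l1 l1 + bil E8m l2 l2 = q + q &
  same_orbit G (L2d_vec a b c d k1 k2 z) (L2d_vec a
    (b - (bil E8m k1 l1 + bil E8m k2 l2) - q * a) c d (k1 + a *: l1) (k2 + a *: l2) z).
Proof.
have [[q1 l1l1] [q2 l2l2]] := (bil_E8m_even l1, bil_E8m_even l2).
exists (q1 + q2); first by rewrite l1l1 l2l2; ring.
apply: (@same_orbit_L2d_eichler (L2d_vec 0 1 0 0 0 0 0) (L2d_vec 0 0 0 0 l1 l2 0) (q1 + q2));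
  L2d_simp; rewrite ?l1l1 ?l2l2; L2d_move.
Qed.

Lemma orbit_f2_E8 l1 l2 a b c d k1 k2 z : exists q,
  same_orbit G (L2d_vec a b c d k1 k2 z) (L2d_vec a b c
    (d - (bil E8m k1 l1 + bil E8m k2 l2) - q * c) (k1 + c *: l1) (k2 + c *: l2) z).
Proof.
have [[q1 l1l1] [q2 l2l2]] := (bil_E8m_even l1, bil_E8m_even l2).
exists (q1 + q2).
apply: (@same_orbit_L2d_eichler (L2d_vec 0 0 0 1 0 0 0) (L2d_vec 0 0 0 0 l1 l2 0) (q1 + q2));
  L2d_simp; rewrite ?l1l1 ?l2l2; L2d_move.
Qed.

Lemma orbit_swap_ac a b c d k1 k2 z :
  same_orbit G (L2d_vec a b c d k1 k2 z) (L2d_vec (- c) (b - d) (c + a) b k1 k2 z).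
Proof.
have -> : L2d_vec (- c) (b - d) (c + a) b k1 k2 z =
    L2d_vec (a - 1 * (c + 1 * a)) (b - 1 * d) (c + 1 * a) (d + 1 * (b - 1 * d)) k1 k2 z.
  by f_equal; ring.
exact: same_orbit_trans (orbit_f1_e2 1 _ _ _ _ _ _ _) (orbit_e1_f2 1 _ _ _ _ _ _ _).
Qed.

Lemma orbit_swap_ad a b c d k1 k2 z :
  same_orbit G (L2d_vec a b c d k1 k2 z) (L2d_vec (- d) (b - c) b (d + a) k1 k2 z).
Proof.
have -> : L2d_vec (- d) (b - c) b (d + a) k1 k2 z =
    L2d_vec (a - 1 * (d + 1 * a)) (b - 1 * c) (c + 1 * (b - 1 * c)) (d + 1 * a) k1 k2 z.
  by f_equal; ring.
exact: same_orbit_trans (orbit_f1_f2 1 _ _ _ _ _ _ _) (orbit_e1_e2 1 _ _ _ _ _ _ _).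
Qed.

End L2dOrbits.

Lemma modz_lt_neq0 (a c : int) : a != 0 -> ~~ (a %| c)%Z ->
  (c %% a)%Z != 0 /\ (`|(c %% a)%Z| < `|a|)%N.
Proof.
move=> a0 ndvd; have := modz_ge0 c a0; have := ltz_mod c a0.
have : (c %% a)%Z != 0 by apply: contra ndvd => /eqP /dvdz_mod0P.
lia.
Qed.

Section NormalForm.
Variables (n : nat) (z : int).
Local Notation G := (L2d n).

Definition normal_orbit x := exists k t, same_orbit G x (L2d_vec k (k * t) 0 0 0 0 z).

Lemma normal_orbit_trans x y : same_orbit G x y -> normal_orbit y -> normal_orbit x.
Proof. by move=> xy [k [t yN]]; exists k, t; apply: same_orbit_trans yN. Qed.

Lemma orbit_reduce a b c d k1 k2 : a != 0 -> ~~ (a %| c)%Z \/ ~~ (a %| d)%Z ->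
  exists a' b' c' d' : int, [/\ a' != 0, (`|a'| < `|a|)%N &
    same_orbit G (L2d_vec a b c d k1 k2 z) (L2d_vec a' b' c' d' k1 k2 z)].
Proof.
move=> a0 [ndvd|ndvd]; have [m0 m_lt] := modz_lt_neq0 a0 ndvd.
- have := same_orbit_trans (orbit_f1_e2 n (- (c %/ a)%Z) a b c d k1 k2 z)
    (orbit_swap_ac n _ _ _ _ _ _ _).
  rewrite (_ : c + _ * a = (c %% a)%Z); last by rewrite {1}(divz_eq c a); ring.
  by move=> R; do 4 eexists; split; last exact: R; rewrite ?oppr_eq0 ?abszN.
- have := same_orbit_trans (orbit_f1_f2 n (- (d %/ a)%Z) a b c d k1 k2 z)
    (orbit_swap_ad n _ _ _ _ _ _ _).
  rewrite (_ : d + _ * a = (d %% a)%Z); last by rewrite {1}(divz_eq d a); ring.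
  by move=> R; do 4 eexists; split; last exact: R; rewrite ?oppr_eq0 ?abszN.
Qed.

Lemma normal_orbit_divisible a b d k1 k2 : (a %| b)%Z -> (a %| d)%Z ->
  (forall l, (a %| bil E8m k1 l)%Z) -> (forall l, (a %| bil E8m k2 l)%Z) ->
  normal_orbit (L2d_vec a b 0 d k1 k2 z).
Proof.
move=> ab ad /E8m_unimodular [x1 ->] /E8m_unimodular [x2 ->].
apply: normal_orbit_trans (orbit_f1_f2 n (- (d %/ a)%Z) _ _ _ _ _ _ _) _.
have [q xx R] := orbit_f1_E8 n (- x1) (- x2) a (b - - (d %/ a)%Z * 0) 0
  (d + - (d %/ a)%Z * a) (a *: x1) (a *: x2) z.
exists a, ((b %/ a)%Z + q); apply: (eq_ind _ (same_orbit G _) R).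
rewrite !bilNl !bilNr !opprK in xx.
have -> : d + - (d %/ a)%Z * a = 0 by rewrite mulNr divzK // subrr.
rewrite !scalerN !addrN !bilZl !bilNr; f_equal.
have -> : bil E8m x1 x1 = q + q - bil E8m x2 x2 by rewrite -xx; ring.
by rewrite -{1}(divzK ab); ring.
Qed.

Lemma normal_orbit_step a b c d k1 k2 : a != 0 ->
  (forall a' b' c' d' k1' k2', a' != 0 -> (`|a'| < `|a|)%N ->
     normal_orbit (L2d_vec a' b' c' d' k1' k2' z)) ->
  normal_orbit (L2d_vec a b c d k1 k2 z).
Proof.
move=> a0 IH.
have reduce b' c' d' k1' k2' : ~~ (a %| c')%Z \/ ~~ (a %| d')%Z ->
    normal_orbit (L2d_vec a b' c' d' k1' k2' z).
  move=> /(orbit_reduce b' k1' k2' a0) [a2 [b2 [c2 [d2 [a2_neq0 a2_lt R]]]]].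
  exact: normal_orbit_trans R (IH _ _ _ _ _ _ a2_neq0 a2_lt).
have [ac|nac] := boolP (a %| c)%Z; last by apply: reduce; left.
have [ad|nad] := boolP (a %| d)%Z; last by apply: reduce; right.
apply: normal_orbit_trans (orbit_f1_e2 n (- (c %/ a)%Z) _ _ _ _ _ _ _) _.
have -> : c + - (c %/ a)%Z * a = 0 by rewrite mulNr divzK // subrr.
set b1 := b - _ * d.
have [adb1|nadb1] := boolP (a %| d + b1)%Z; last first.
  apply: normal_orbit_trans (orbit_e1_f2 n 1 _ _ _ _ _ _ _) _.
  by rewrite mulr0 subr0 mul1r; apply: reduce; right.
have ab1 : (a %| b1)%Z by rewrite -(rpredDl _ ad).
have [[l1 [l2 nal]]|al] :=
  classic (exists l1 l2, ~~ (a %| d - (bil E8m k1 l1 + bil E8m k2 l2))%Z).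
  have [q R] := orbit_f2_E8 n l1 l2 a b1 0 d k1 k2 z.
  apply: normal_orbit_trans R _; rewrite mulr0 subr0 !scale0r !addr0.
  by apply: reduce; right.
(* Otherwise [a] divides every pairing with [k1] and [k2], which are thus multiples of [a]. *)
have akl l1 l2 : (a %| bil E8m k1 l1 + bil E8m k2 l2)%Z.
  apply: NNPP => nakl; apply: al; exists l1, l2.
  by apply/negP; rewrite (rpredBl _ ad).
apply: normal_orbit_divisible => // l.
- by have := akl l 0; rewrite bil0r addr0.
- by have := akl 0 l; rewrite bil0r add0r.
Qed.

Lemma normal_orbit_neq0 a b c d k1 k2 : a != 0 -> normal_orbit (L2d_vec a b c d k1 k2 z).
Proof.
have [m] := ubnP `|a|; elim: m => // m IH in a b c d k1 k2 *.
move=> a_lt a0; apply: normal_orbit_step => // a' b' c' d' k1' k2' a'0 a'_lt.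
by apply: IH => //; apply: leq_trans a'_lt _.
Qed.

Lemma normal_orbit_L2d_vec a b c d k1 k2 : normal_orbit (L2d_vec a b c d k1 k2 z).
Proof.
have from_c a' b' c' d' k1' k2' : c' != 0 -> normal_orbit (L2d_vec a' b' c' d' k1' k2' z).
  move=> c'0; apply: normal_orbit_trans (orbit_swap_ac n _ _ _ _ _ _ _) _.
  by apply: normal_orbit_neq0; rewrite oppr_eq0.
have from_d a' b' c' d' k1' k2' : d' != 0 -> normal_orbit (L2d_vec a' b' c' d' k1' k2' z).
  move=> d'0; apply: normal_orbit_trans (orbit_swap_ad n _ _ _ _ _ _ _) _.
  by apply: normal_orbit_neq0; rewrite oppr_eq0.
have [->|a0] := eqVneq a 0; last exact: normal_orbit_neq0.
have [->|c0] := eqVneq c 0; last exact: from_c.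
have [->|d0] := eqVneq d 0; last exact: from_d.
have [->|b0] := eqVneq b 0; last first.
  apply: normal_orbit_trans (orbit_e1_f2 n 1 _ _ _ _ _ _ _) _.
  by apply: from_d; rewrite mul1r add0r.
have [->|k1_0] := eqVneq k1 0; last first.
  have [l kl] := E8m_nondegenerate k1_0.
  have [q R] := orbit_f2_E8 n l 0 0 0 0 0 k1 k2 z.
  apply: normal_orbit_trans R _; apply: from_d.
  by rewrite mulr0 subr0 sub0r oppr_eq0 bil0r addr0.
have [->|k2_0] := eqVneq k2 0; last first.
  have [l kl] := E8m_nondegenerate k2_0.
  have [q R] := orbit_f2_E8 n 0 l 0 0 0 0 0 k2 z.
  apply: normal_orbit_trans R _; apply: from_d.
  by rewrite mulr0 subr0 sub0r oppr_eq0 bil0r add0r.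
by exists 0, 0; rewrite mul0r; apply: same_orbit_refl.
Qed.

End NormalForm.

Lemma L2d_normal_form n x :
  exists k t z, same_orbit (L2d n) x (L2d_vec k (k * t) 0 0 0 0 z).
Proof.
have [a [b [c [d [k1 [k2 [z ->]]]]]]] := L2d_vecP x.
by have [k [t R]] := normal_orbit_L2d_vec n z a b c d k1 k2; exists k, t, z.
Qed.

(** * Orthogonal complements of vectors in normal form *)

Definition basis2 (R : nzRingType) (V : lmodType R) (S : V -> Prop) (w1 w2 : V) :=
  (forall x, S x <-> exists c1 c2, x = c1 *: w1 + c2 *: w2) /\
  (forall c1 c2, c1 *: w1 + c2 *: w2 = 0 -> c1 = 0 /\ c2 = 0).

Lemma basis2_unimodular (R : comNzRingType) (V : lmodType R) (S : V -> Prop) w1 w2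
    (p11 p12 p21 p22 : R) :
  (p11 * p22 - p12 * p21) ^+ 2 = 1 -> basis2 S w1 w2 ->
  basis2 S (p11 *: w1 + p12 *: w2) (p21 *: w1 + p22 *: w2).
Proof.
set s := p11 * p22 - p12 * p21 => s2 [S_span S_free].
have comb e1 e2 : e1 *: (p11 *: w1 + p12 *: w2) + e2 *: (p21 *: w1 + p22 *: w2) =
    (e1 * p11 + e2 * p21) *: w1 + (e1 * p12 + e2 * p22) *: w2.
  by rewrite !scalerDr !scalerA !scalerDl addrACA.
split=> [x|e1 e2]; last first.
  rewrite comb => /S_free [h1 h2].
  have e1s : e1 * s = 0.
    transitivity ((e1 * p11 + e2 * p21) * p22 - (e1 * p12 + e2 * p22) * p21).
      by rewrite /s; ring.
    by rewrite h1 h2; ring.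
  have e2s : e2 * s = 0.
    transitivity ((e1 * p12 + e2 * p22) * p11 - (e1 * p11 + e2 * p21) * p12).
      by rewrite /s; ring.
    by rewrite h1 h2; ring.
  by rewrite -[e1]mulr1 -[e2]mulr1 -s2 expr2 !mulrA e1s e2s !mul0r.
rewrite S_span; split=> [[c1 [c2 ->]]|[e1 [e2 ->]]]; last by rewrite comb; do 2 eexists.
exists (s * (c1 * p22 - c2 * p21)), (s * (c2 * p11 - c1 * p12)); rewrite comb.
by congr (_ *: _ + _ *: _); rewrite -[LHS]mulr1 -s2 /s; ring.
Qed.

Definition mx2 (a b c d : int) : 'M[int]_2 :=
  \matrix_(i, j) if (i : nat) == 0%N then (if (j : nat) == 0%N then a else b)
                 else if (j : nat) == 0%N then c else d.

Lemma block_mx2 (a b c d : int) :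
  block_mx (a%:M : 'M_1) b%:M c%:M d%:M = mx2 a b c d :> 'M_(1 + 1).
Proof.
apply/matrixP => i j; rewrite [RHS]mxE.
case: (splitP i) => i' ei; case: (splitP j) => j' ej.
- have -> : i = lshift 1 i' by apply/val_inj.
  have -> : j = lshift 1 j' by apply/val_inj.
  by rewrite block_mxEul (ord1 i') (ord1 j') !mxE.
- have -> : i = lshift 1 i' by apply/val_inj.
  have -> : j = rshift 1 j' by apply/val_inj.
  by rewrite block_mxEur (ord1 i') (ord1 j') !mxE.
- have -> : i = rshift 1 i' by apply/val_inj.
  have -> : j = lshift 1 j' by apply/val_inj.
  by rewrite block_mxEdl (ord1 i') (ord1 j') !mxE.
- have -> : i = rshift 1 i' by apply/val_inj.
  have -> : j = rshift 1 j' by apply/val_inj.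
  by rewrite block_mxEdr (ord1 i') (ord1 j') !mxE.
Qed.

Lemma gram_col_mx2 n (G : 'M[int]_n) (x y : 'rV[int]_n) :
  gram G (col_mx x y) (col_mx x y) =
  mx2 (bil G x x) (bil G x y) (bil G y x) (bil G y y).
Proof.
by rewrite -block_mx2 /block_mx gram_col_mxl !gram_col_mxr !bil_gram -!mx11_scalar.
Qed.

Lemma Ugram_mx2 : Ugram = mx2 0 1 1 0.
Proof.
by apply/matrixP => i j; rewrite !mxE; case: i => [[|[|//]] ?]; case: j => [[|[|//]] ?].
Qed.

Lemma U2gram_mx2 : U2gram = mx2 0 2 2 0.
Proof.
by apply/matrixP => i j; rewrite !mxE; case: i => [[|[|//]] ?]; case: j => [[|[|//]] ?].
Qed.

Lemma dsum_rank1_mx2 (a b : int) : dsum (rank1 a) (rank1 b) = mx2 a 0 0 b.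
Proof. by rewrite /dsum /rank1 -block_mx2 !raddf0. Qed.

Definition in_U1z (x : 'rV[int]_(2 + 2 + 8 + 8 + 1)) :=
  exists a b z, x = L2d_vec a b 0 0 0 0 z.

Definition U2_basis : 'M[int]_(2, 2 + 2 + 8 + 8 + 1) := L2d_mx 0 1%:M 0 0 0.
Definition E8l_basis : 'M[int]_(8, 2 + 2 + 8 + 8 + 1) := L2d_mx 0 0 1%:M 0 0.
Definition E8r_basis : 'M[int]_(8, 2 + 2 + 8 + 8 + 1) := L2d_mx 0 0 0 1%:M 0.

Definition L2d_split_basis (w1 w2 : 'rV[int]_(2 + 2 + 8 + 8 + 1)) :
  'M[int]_(2 + 8 + 8 + (1 + 1), 2 + 2 + 8 + 8 + 1) :=
  col_mx (col_mx (col_mx U2_basis E8l_basis) E8r_basis) (col_mx w1 w2).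

Lemma mul_L2d_split_basis (cu : 'rV_2) (ck1 ck2 : 'rV_8) (c1 c2 : 'rV_1) w1 w2 :
  row_mx (row_mx (row_mx cu ck1) ck2) (row_mx c1 c2) *m L2d_split_basis w1 w2 =
  L2d_vec 0 0 (cu 0 0) (cu 0 1) ck1 ck2 0 + (c1 0 0 *: w1 + c2 0 0 *: w2).
Proof.
rewrite !mul_row_col !mul_mx11 /U2_basis /E8l_basis /E8r_basis !mul_L2d_mx.
rewrite !mulmx0 !mulmx1 !L2d_mxD !addr0 !add0r /L2d_vec -hvecE hvec0.
by rewrite raddf0.
Qed.

Lemma row_mx_split5 (c : 'rV[int]_(2 + 8 + 8 + (1 + 1))) :
  exists cu ck1 ck2 c1 c2, c = row_mx (row_mx (row_mx cu ck1) ck2) (row_mx c1 c2).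
Proof.
exists (lsubmx (lsubmx (lsubmx c))), (rsubmx (lsubmx (lsubmx c))), (rsubmx (lsubmx c)),
  (lsubmx (rsubmx c)), (rsubmx (rsubmx c)).
by rewrite !hsubmxK.
Qed.

Lemma basis2_comb (R : nzRingType) (V : lmodType R) (S : V -> Prop) w1 w2 c1 c2 :
  basis2 S w1 w2 -> S (c1 *: w1 + c2 *: w2).
Proof. by case=> S_span _; apply/S_span; exists c1, c2. Qed.

Section L2dSplit.
Variables (n : nat) (k l z : int) (w1 w2 : 'rV[int]_(2 + 2 + 8 + 8 + 1)).
Local Notation G := (L2d n).
Local Notation r := (L2d_vec k l 0 0 0 0 z).
Local Notation B := (L2d_split_basis w1 w2).
Hypothesis w_basis : basis2 (fun x => in_U1z x /\ bil G r x = 0) w1 w2.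

Lemma bil_U1z_vec a b c d k1 k2 zz :
  bil G r (L2d_vec a b c d k1 k2 zz) = bil G r (L2d_vec a b 0 0 0 0 zz).
Proof. by rewrite !bil_L2d_vec !bil0l; ring. Qed.

Lemma L2d_split_basis_free (c : 'rV_(2 + 8 + 8 + (1 + 1))) : c *m B = 0 -> c = 0.
Proof.
have [S_span S_free] := w_basis.
have [cu [ck1 [ck2 [c1 [c2 ->]]]]] := row_mx_split5 c.
have [[a [b [zz wE]]] _] := basis2_comb (c1 0 0) (c2 0 0) w_basis.
rewrite mul_L2d_split_basis wE L2d_vecD !add0r !addr0 -L2d_vec0.
move=> /L2d_vec_inj [[a0 b0 cu0 cu1] [-> -> zz0]].
have [c1_0 c2_0] : c1 0 0 = 0 /\ c2 0 0 = 0.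
  by apply: S_free; rewrite wE a0 b0 zz0 L2d_vec0.
by rewrite [cu]hvecE [c1]mx11_scalar [c2]mx11_scalar cu0 cu1 c1_0 c2_0 hvec0 raddf0 !row_mx0.
Qed.

Lemma L2d_split_basis_span x : bil G r x = 0 <-> exists c, x = c *m B.
Proof.
have [S_span _] := w_basis.
have [a [b [c [d [k1 [k2 [zz ->]]]]]]] := L2d_vecP x.
rewrite bil_U1z_vec; split=> [rx|[cc]].
  have [|c1 [c2 xE]] := (S_span (L2d_vec a b 0 0 0 0 zz)).1; first by split; do 3 ?eexists.
  exists (row_mx (row_mx (row_mx (hvec c d) k1) k2) (row_mx c1%:M c2%:M)).
  rewrite mul_L2d_split_basis !mxE /= !mulr1n -xE L2d_vecD.
  by f_equal; rewrite ?add0r ?addr0.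
have [cu [ck1 [ck2 [c1 [c2 ->]]]]] := row_mx_split5 cc.
rewrite mul_L2d_split_basis.
have [[a' [b' [zz' ->]]] w0] := basis2_comb (c1 0 0) (c2 0 0) w_basis.
by rewrite L2d_vecD !add0r => /L2d_vec_inj [[-> -> _ _] [_ _ ->]].
Qed.

Lemma L2d_split_basis_gram :
  gram G B B = dsum (dsum (dsum Ugram E8m) E8m) (gram G (col_mx w1 w2) (col_mx w1 w2)).
Proof.
have [[a1 [b1 [z1 w1E]]] _] := basis2_comb 1 0 w_basis.
have [[a2 [b2 [z2 w2E]]] _] := basis2_comb 0 1 w_basis.
rewrite scale1r scale0r addr0 in w1E; rewrite scale0r scale1r add0r in w2E.
have G_sym := tr_L2d n.
have gram_L2d_vec p (X : 'M_(p, _)) a b zz :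
    gram G X (L2d_vec a b 0 0 0 0 zz) = gram G X (L2d_mx (hvec a b) 0 0 0 zz%:M).
  by rewrite /L2d_vec hvec0.
rewrite /L2d_split_basis /U2_basis /E8l_basis /E8r_basis.
rewrite gram_col_mx_orth //; last first.
  by rewrite !gram_col_mxl !gram_col_mxr w1E w2E !gram_L2d_vec !gram_L2d_mx !gram0l !gram0r
    !addr0 !row_mx0 !col_mx0.
rewrite gram_col_mx_orth //; last first.
  by rewrite gram_col_mxl !gram_L2d_mx !gram0l !gram0r !addr0 ?row_mx0 col_mx0.
rewrite gram_col_mx_orth //; last by rewrite !gram_L2d_mx !gram0l !gram0r !addr0.
by rewrite !gram_L2d_mx !gram0l ?gram0r !gram_id !addr0 !add0r.
Qed.

Lemma perp_iso_L2d_split :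
  perp_iso G r (dsum (dsum (dsum Ugram E8m) E8m) (gram G (col_mx w1 w2) (col_mx w1 w2))).
Proof.
exists B; split; first exact: L2d_split_basis_free.
by split; [exact: L2d_split_basis_span | exact: L2d_split_basis_gram].
Qed.

End L2dSplit.

(** * Integral binary forms of determinant -1 *)

Definition bform (al be ga x y x' y' : int) :=
  al * x * x' + be * (x * y' + y * x') + ga * y * y'.

Lemma bformC al be ga x y x' y' : bform al be ga x y x' y' = bform al be ga x' y' x y.
Proof. by rewrite /bform; ring. Qed.

Section UnimodularBinaryForm.
Variables al be ga : int.
Hypothesis det_form : al * ga - be * be = -1.
Local Notation Q := (bform al be ga).

(* [al * Q x y x y = (al x + be y)^2 - y^2], and [al x + be y = y] when
   [(x, y) = (1 - be, al) / gcd(1 - be, al)]. *)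
Lemma bform_primitive_isotropic :
  exists x y u v : int, Q x y x y = 0 /\ u * x + v * y = 1.
Proof.
have [->|al0] := eqVneq al 0; first by exists 1, 0, 1, 0; split; rewrite /bform; ring.
have [u [v uv]] := Bezoutz (1 - be) al; set g := gcdz (1 - be) al in uv.
have g0 : g != 0 by rewrite gcdz_eq0 negb_and al0 orbT.
have xg : ((1 - be) %/ g)%Z * g = 1 - be by rewrite divzK // dvdz_gcdl.
have yg : (al %/ g)%Z * g = al by rewrite divzK // dvdz_gcdr.
set x := ((1 - be) %/ g)%Z in xg; set y := (al %/ g)%Z in yg.
exists x, y, u, v; split.
- have alx : al * x = y * (1 - be) by rewrite -yg -xg; ring.
  have : al * Q x y x y = 0.
    transitivity (y * y * (1 - be * be + al * ga) +
      (al * x - y * (1 - be)) * (al * x + y * (1 - be) + 2 * be * y)).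
      by rewrite /bform; ring.
    by rewrite (_ : 1 - be * be + al * ga = 0) ?alx ?subrr ?mul0r ?mulr0 ?addr0 //; lia.
  by move/eqP; rewrite mulf_eq0 (negbTE al0) => /eqP.
- apply: (mulIf g0).
  by transitivity (u * (x * g) + v * (y * g)); [ring | rewrite xg yg uv mul1r].
Qed.

Lemma bform_reduced_basis : exists x y w1 w2 : int,
  [/\ (x * w2 - y * w1) ^+ 2 = 1, Q x y x y = 0, Q x y w1 w2 = 1 &
      Q w1 w2 w1 w2 = 0 \/ Q w1 w2 w1 w2 = 1].
Proof.
have [x [y [u [v [Qx uv]]]]] := bform_primitive_isotropic.
(* [w] pairs to [1] with [x] by Bezout; shifting it by multiples of [x] brings [Q w w] into
   [{0, 1}]. *)
pose w1 := - u * ga + v * be; pose w2 := u * be - v * al.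
have Qxw : Q x y w1 w2 = 1.
  transitivity ((u * x + v * y) * (be * be - al * ga)).
    by rewrite /bform /w1 /w2; ring.
  by rewrite uv mul1r; lia.
pose lam := (Q w1 w2 w1 w2 %/ 2)%Z.
exists x, y, (w1 - lam * x), (w2 - lam * y); split.
- have : (x * (w2 - lam * y) - y * (w1 - lam * x)) ^+ 2 * (al * ga - be * be) =
    Q x y x y * Q (w1 - lam * x) (w2 - lam * y) (w1 - lam * x) (w2 - lam * y)
    - Q x y (w1 - lam * x) (w2 - lam * y) ^+ 2 by rewrite /bform; ring.
  have -> : Q x y (w1 - lam * x) (w2 - lam * y) = Q x y w1 w2 - lam * Q x y x y.
    by rewrite /bform; ring.
  by rewrite det_form Qx Qxw; lia.
- exact: Qx.
- transitivity (Q x y w1 w2 - lam * Q x y x y); first by rewrite /bform; ring.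
  by rewrite Qxw Qx; ring.
- have -> : Q (w1 - lam * x) (w2 - lam * y) (w1 - lam * x) (w2 - lam * y) =
    (Q w1 w2 w1 w2 %% 2)%Z.
    transitivity (Q w1 w2 w1 w2 - lam * 2 * Q x y w1 w2 + lam * lam * Q x y x y).
      by rewrite /bform; ring.
    by rewrite Qxw Qx {1}(divz_eq (Q w1 w2 w1 w2) 2) /lam; ring.
  by have := modz_ge0 (Q w1 w2 w1 w2) (isT : 2 != 0 :> int);
     have := ltz_pmod (Q w1 w2 w1 w2) (isT : 0 < 2 :> int); lia.
Qed.

End UnimodularBinaryForm.

Section NormalFormPerp.
Variables (n : nat) (K kp A t z : int).
Hypotheses (K_neq0 : K != 0) (zA : (2 * n)%:Z * z = K * A)
  (kp_A_coprime : exists u v, u * kp + v * A = 1).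
Local Notation G := (L2d n).
Local Notation r := (L2d_vec (K * kp) (K * kp * t) 0 0 0 0 z).
Local Notation phi1 := (L2d_vec 1 (- t) 0 0 0 0 0).
Local Notation phi2 := (L2d_vec 0 A 0 0 0 0 kp).
Local Notation Q := (bform (- (t + t)) A (- (2 * n)%:Z * kp * kp)).

Lemma phi_comb c1 c2 :
  c1 *: phi1 + c2 *: phi2 = L2d_vec c1 (- t * c1 + A * c2) 0 0 0 0 (kp * c2).
Proof. by rewrite !L2d_vecZ L2d_vecD !scaler0 !mulr0 !addr0; f_equal; ring. Qed.

Lemma bil_normal_vec a b zz :
  bil G r (L2d_vec a b 0 0 0 0 zz) = K * (kp * (b + t * a) - A * zz).
Proof. by rewrite bil_L2d_vec !bil0l zA; ring. Qed.

Lemma normal_perp_basis : basis2 (fun x => in_U1z x /\ bil G r x = 0) phi1 phi2.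
Proof.
have [u [v uv]] := kp_A_coprime.
split=> [x|c1 c2]; last first.
  rewrite phi_comb -L2d_vec0 => /L2d_vec_inj [[-> bA _ _] [_ _ kpc2]].
  split=> //; rewrite -[c2]mul1r -uv mulrDl -!mulrA kpc2 mulr0 add0r.
  by move: bA; rewrite mulr0 add0r => ->; rewrite mulr0.
split=> [[[a [b [zz ->]]]]|[c1 [c2 ->]]]; last first.
  rewrite phi_comb bil_normal_vec; split; first by do 3 eexists.
  by rewrite (_ : _ - _ = 0) ?mulr0 //; ring.
rewrite bil_normal_vec => /eqP; rewrite mulf_eq0 (negbTE K_neq0) subr_eq0 => /eqP kpA.
exists a, (u * zz + v * (b + t * a)); rewrite phi_comb; f_equal; symmetry.
- transitivity (- t * a + u * (A * zz) + v * A * (b + t * a)); first by ring.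
  rewrite -kpA; transitivity ((u * kp + v * A) * (b + t * a) - t * a); first by ring.
  by rewrite uv; ring.
- transitivity (u * kp * zz + v * (kp * (b + t * a))); first by ring.
  rewrite kpA; transitivity ((u * kp + v * A) * zz); first by ring.
  by rewrite uv mul1r.
Qed.

Lemma bil_phi_comb x y x' y' :
  bil G (x *: phi1 + y *: phi2) (x' *: phi1 + y' *: phi2) = Q x y x' y'.
Proof. by rewrite !phi_comb bil_L2d_vec !bil0l /bform; ring. Qed.

Lemma perp_iso_normal_form x y w1 w2 : (x * w2 - y * w1) ^+ 2 = 1 ->
  perp_iso G r (dsum (dsum (dsum Ugram E8m) E8m)
    (mx2 (Q x y x y) (Q x y w1 w2) (Q x y w1 w2) (Q w1 w2 w1 w2))).
Proof.
move=> det; have := perp_iso_L2d_split (basis2_unimodular det normal_perp_basis).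
by rewrite gram_col_mx2 !bil_phi_comb [Q w1 w2 x y]bformC.
Qed.

End NormalFormPerp.

Lemma is_div_normal_form n k t z m :
  is_div (L2d n) (L2d_vec k (k * t) 0 0 0 0 z) m ->
  exists kp A, [/\ k = m * kp, (2 * n)%:Z * z = m * A & exists u v, u * kp + v * A = 1].
Proof.
case=> m_gt0 [m_dvd [x rx]]; have m_neq0 : m != 0 by rewrite gt_eqF.
have [kp kE] : exists kp, k = m * kp.
  have /dvdzP [kp kE] := m_dvd (L2d_vec 0 1 0 0 0 0 0).
  by exists kp; rewrite mulrC -kE bil_L2d_vec !bil0l; ring.
have [A zA] : exists A, (2 * n)%:Z * z = m * A.
  have /dvdzP [A zA] := m_dvd (L2d_vec 0 0 0 0 0 0 1).
  by exists (- A); rewrite mulrN [m * _]mulrC -zA bil_L2d_vec !bil0l; ring.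
exists kp, A; split=> //.
have [xa [xb [xc [xd [l1 [l2 [xz xE]]]]]]] := L2d_vecP x.
exists (xb + t * xa), (- xz); apply: (mulfI m_neq0).
by rewrite mulr1 -{2}rx xE bil_L2d_vec !bil0l zA kE; ring.
Qed.

Section NormalFormCases.
Variables (n : nat) (k t z : int).
Hypothesis n_gt0 : (0 < n)%N.
Local Notation G := (L2d n).
Local Notation r := (L2d_vec k (k * t) 0 0 0 0 z).
Hypothesis r_norm : bil G r r = - (2 * n)%:Z.

Lemma normal_form_norm : k * k * t - n%:Z * z * z = - n%:Z.
Proof. by move: r_norm; rewrite bil_L2d_vec !bil0l PoszM; lia. Qed.

Lemma perp_iso_div2d : is_div G r (2 * n)%:Z ->
  perp_iso G r (dsum (dsum (dsum Ugram Ugram) E8m) E8m).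
Proof.
have n_neq0 : n%:Z != 0 by rewrite eqz_nat -lt0n.
have n2_neq0 : (2 * n)%:Z != 0 by rewrite PoszM mulf_neq0.
case/is_div_normal_form => kp [A [kE zA kpA]].
have Az : A = z by apply: (mulfI n2_neq0); rewrite -zA.
have det : - (t + t) * (- (2 * n)%:Z * kp * kp) - z * z = -1.
  by apply: (mulfI n_neq0); move: normal_form_norm; rewrite kE PoszM; lia.
have [x [y [w1 [w2 [unimod Qx Qxw Qw]]]]] := bform_reduced_basis det.
have Qw0 : bform (- (t + t)) z (- (2 * n)%:Z * kp * kp) w1 w2 w1 w2 = 0.
  case: Qw => // Qw1; move: Qw1; rewrite /bform PoszM; lia.
have := perp_iso_normal_form t n2_neq0 zA kpA unimod.
rewrite -kE Az Qx Qxw Qw0 -Ugram_mx2 => /perp_iso_dsumC.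
by rewrite dsumA castmx_id dsumA castmx_id.
Qed.

Lemma perp_iso_divd : is_div G r n%:Z ->
  perp_iso G r (dsum (dsum (dsum (dsum Ugram E8m) E8m) (rank1 2)) (rank1 (-2)))
  \/ perp_iso G r (dsum (dsum (dsum Ugram E8m) E8m) U2gram).
Proof.
have n_neq0 : n%:Z != 0 by rewrite eqz_nat -lt0n.
case/is_div_normal_form => kp [A [kE zA kpA]].
have Az : A = 2 * z by apply: (mulfI n_neq0); rewrite -zA PoszM; ring.
have det : - t * (- n%:Z * kp * kp) - z * z = -1.
  by apply: (mulfI n_neq0); move: normal_form_norm; rewrite kE; lia.
have Q2 x y x' y' : bform (- (t + t)) A (- (2 * n)%:Z * kp * kp) x y x' y' =
    2 * bform (- t) z (- n%:Z * kp * kp) x y x' y'.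
  by rewrite Az PoszM /bform; ring.
have [x [y [w1 [w2 [unimod Qx Qxw [Qw|Qw]]]]]] := bform_reduced_basis det;
  set Q := bform (- t) z _ in Q2 Qx Qxw Qw.
- right; have := perp_iso_normal_form t n_neq0 zA kpA unimod.
  by rewrite -kE !Q2 Qx Qxw Qw mulr0 U2gram_mx2.
- (* The basis [(w, x - w)] turns the Gram matrix [[0, 1], [1, 1]] into [<1> + <-1>]. *)
  left; have unimod' : (w1 * (y - w2) - w2 * (x - w1)) ^+ 2 = 1 by rewrite -unimod; ring.
  have Qwv : Q w1 w2 (x - w1) (y - w2) = 0.
    transitivity (Q x y w1 w2 - Q w1 w2 w1 w2); first by rewrite /Q /bform; ring.
    by rewrite Qxw Qw subrr.
  have Qv : Q (x - w1) (y - w2) (x - w1) (y - w2) = -1.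
    transitivity (Q x y x y - 2 * Q x y w1 w2 + Q w1 w2 w1 w2); first by rewrite /Q /bform; ring.
    by rewrite Qx Qxw Qw; ring.
  have := perp_iso_normal_form t n_neq0 zA kpA unimod'.
  rewrite -kE !Q2 Qw Qwv Qv mulr0 mulr1 mulrN1 -dsum_rank1_mx2.
  by rewrite (@dsumA _ 1 1) castmx_id.
Qed.

End NormalFormCases.

Theorem proposition4p6 (d : nat) (hd : (1 <= d)%N)
  (r : 'rV[int]_(2 + 2 + 8 + 8 + 1)) :
  primitive r -> bil (L2d d) r r = - (2 * d)%:Z ->
  (is_div (L2d d) r (2 * d)%:Z ->
     perp_iso (L2d d) r (dsum (dsum (dsum Ugram Ugram) E8m) E8m)) /\
  (is_div (L2d d) r d%:Z ->
     perp_iso (L2d d) r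
       (dsum (dsum (dsum (dsum Ugram E8m) E8m) (rank1 2)) (rank1 (-2)))
     \/ perp_iso (L2d d) r (dsum (dsum (dsum Ugram E8m) E8m) U2gram)).
Proof.
move=> _ r_norm; have [k [t [z orbit_r]]] := L2d_normal_form d r.
have r0_norm := same_orbit_bil orbit_r; rewrite r_norm in r0_norm.
split=> /(same_orbit_div orbit_r) r0_div.
  by apply: (same_orbit_perp orbit_r); apply: perp_iso_div2d.
by case: (perp_iso_divd hd r0_norm r0_div) => r0_perp; [left | right];
  apply: (same_orbit_perp orbit_r).
Qed.
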